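(* There is a constant $N>0$ such that for every discriminant $D\in\mathcal{O}_d$ with $|D|>N$ the following holds. Let $\epsilon_D$ be a fundamental solution of $t^2-u^2D=4$, write $\epsilon_D^{\,n+1}=\frac12(t_n+u_n\sqrt{D})$ with $t_n,u_n\in\mathcal{O}_d$ for $n\ge0$, and let $m(\epsilon_D)=\min\{n\ge0 : |t_n|<\frac49|u_n|^2\}$ (which exists and lies in $\{0,1,2\}$). If $m(\epsilon_D)\neq 0$, then $|u_{m(\epsilon_D)}|\le 30|D|^{3/2}$.
   Context: $d\in\{1,2,3,7,11,19,43,67,163\}$ (so $k_d=\mathbb{Q}(\sqrt{-d})$ has class number one), $\mathcal{O}_d$ is the ring of integers of $k_d$. An element $D\in\mathcal{O}_d$ is a discriminant if $D$ is not a perfect square in $\mathcal{O}_d$ and $D\equiv x^2\pmod{4\mathcal{O}_d}$ for some $x\in\mathcal{O}_d$. The square root $\sqrt{D}$ is chosen with argument in $[0,\pi)$. For a solution $(t,u)\in\mathcal{O}_d^2$ of $t^2-u^2D=4$ set $\epsilon_{t,u}=\frac12(t+u\sqrt{D})$. A solution $(t_0,u_0)$ is fundamental if $|\epsilon_{t_0,u_0}|$ is the smallest value larger than $1$ among all $|\epsilon_{t,u}|$; then $\epsilon_D=\epsilon_{t_0,u_0}$. *)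

From HB Require Import structures.
From mathcomp Require Import all_boot all_order all_algebra all_field.
Set Implicit Arguments. Unset Strict Implicit. Unset Printing Implicit Defensive.
Import Order.TTheory GRing.Theory Num.Theory.
Local Open Scope ring_scope.

(* The nine d with class number one for Q(sqrt(-d)). *)
Definition class_one_d : seq nat := [:: 1; 2; 3; 7; 11; 19; 43; 67; 163]%N.

(* sqrtC z is the square root of z with argument in [0, pi). *)
(* Integral basis generator of O_d: (1 + sqrt(-d))/2 if -d = 1 mod 4, else sqrt(-d). *)
Definition omega_d (d : nat) : algC :=
  if (d %% 4 == 3)%N then (1 + sqrtC (- d%:R)) / 2 else sqrtC (- d%:R).

Definition in_Od (d : nat) (z : algC) : Prop :=
  exists a b : int, z = a%:~R + b%:~R * omega_d d.

Definition is_discriminant (d : nat) (D : algC) : Prop :=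
  [/\ in_Od d D,
      ~ (exists x, in_Od d x /\ D = x ^+ 2) &
      exists x y, [/\ in_Od d x, in_Od d y & D - x ^+ 2 = 4 * y]].

Definition pell_sol (d : nat) (D t u : algC) : Prop :=
  [/\ in_Od d t, in_Od d u & t ^+ 2 - u ^+ 2 * D = 4].

Definition eps_tu (D t u : algC) : algC := (t + u * sqrtC D) / 2.

Definition fundamental_sol (d : nat) (D t0 u0 : algC) : Prop :=
  [/\ pell_sol d D t0 u0, 1 < `|eps_tu D t0 u0| &
      forall t u, pell_sol d D t u -> 1 < `|eps_tu D t u| ->
        `|eps_tu D t0 u0| <= `|eps_tu D t u| ].

(* The coordinates (t_n, u_n) of eps_D^(n+1) are uniquely determined: otherwise
   sqrt D would lie in k_d, hence (being an algebraic integer) in the integrally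
   closed ring O_d, and D would be a square.  So t_1 = t^2 - 2, u_1 = t u,
   t_2 = t^3 - 3 t and u_2 = u (t^2 - 1), where eps_D = (t + u sqrt D)/2.
   As |eps_D| > 1 we have u <> 0, hence |u| >= 1, and the Pell equation gives
   |t|^2 = |u|^2 |D| up to 4.  If the condition |t_n| < 4/9 |u_n|^2 fails at
   n = 0 then |t| <= 3 |D| and |u| <= 3 sqrt |D|, which bounds u_1; if it also
   fails at n = 1 then |u| <= 3, which bounds u_2; and for |D| > 200 it cannot
   fail at n = 2. *)
From HB Require Import structures.
From mathcomp Require Import all_boot all_order all_algebra all_field.
From mathcomp Require Import zify ring lra.
Set Implicit Arguments. Unset Strict Implicit. Unset Printing Implicit Defensive.
Import Order.TTheory GRing.Theory Num.Theory.
Local Open Scope ring_scope.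

Lemma prime_dvdz_sqr (p : nat) (y w : int) :
  prime p -> y ^+ 2 = p%:Z * w -> (p%:Z %| y)%Z.
Proof.
move=> p_pr yE; have : (p%:Z %| y ^+ 2)%Z by rewrite yE dvdz_mulr.
by rewrite !dvdzE abszX Euclid_dvdX // => /andP[].
Qed.

Lemma dvdz2_sqr_add_odd_sqr (a c e m : int) :
  a ^+ 2 + (2 * e + 1) * c ^+ 2 = 4 * m -> (2 %| a - c)%Z.
Proof. by move=> h; nia. Qed.

Lemma dvdz2_sqr_add_sqr (a c m : int) :
  a ^+ 2 + c ^+ 2 = 4 * m -> (2 %| a)%Z && (2 %| c)%Z.
Proof. by move=> h; nia. Qed.

Lemma dvdz2_sqr_add_2sqr (a c m : int) :
  a ^+ 2 + 2 * c ^+ 2 = 4 * m -> (2 %| a)%Z && (2 %| c)%Z.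
Proof. by move=> h; nia. Qed.

Lemma Aint_conjC x : x \in Aint -> x^* \in Aint.
Proof. by rewrite (Aint_aut Num.conj). Qed.

Lemma Aint_root_quadratic x b c : b \in Num.int -> c \in Num.int ->
  x ^+ 2 - b * x + c = 0 -> x \in Aint.
Proof.
move=> b_int c_int x_root.
pose p : {poly algC} := 'X^2 - b%:P * 'X + c%:P.
have pE : p = ('X - x%:P) * ('X - (b - x)%:P).
  rewrite /p (_ : c = x * (b - x)) ?polyCM ?polyCB; first by ring.
  by apply/eqP; rewrite -subr_eq0 -x_root; apply/eqP; ring.
apply: (@root_monic_Aint p).
- by rewrite pE rootM root_XsubC eqxx.
- by rewrite pE monicMl ?monicXsubC.
apply/polyOverP => i; rewrite coefD coefB coefXn coefCM coefX coefC.
by case: i => [|[|[|i]]] /=;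
  rewrite ?mulr0 ?mulr1 ?subr0 ?add0r ?addr0 ?sub0r ?rpredN ?rpred1 ?rpred0.
Qed.

Lemma Aint_sqrt x y : y + y^* \in Num.int -> y * y^* \in Num.int ->
  x ^+ 2 = y -> x \in Aint.
Proof.
move=> tr_int nm_int xE.
pose p : {poly algC} := 'X^4 - (y + y^*)%:P * 'X^2 + (y * y^*)%:P.
have pE : p = ('X^2 - y%:P) * ('X^2 - (y^*)%:P) by rewrite /p polyCM polyCD; ring.
apply: (@root_monic_Aint p).
- by rewrite pE rootM /root !hornerE xE subrr eqxx.
- by rewrite pE monicMl ?monicXnsubC.
apply/polyOverP => i; rewrite coefD coefB coefXn coefCM coefXn coefC.
by case: i => [|[|[|[|[|i]]]]] /=;
  rewrite ?mulr0 ?mulr1 ?subr0 ?add0r ?addr0 ?sub0r ?rpredN ?rpred1 ?rpred0.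
Qed.

Lemma Cint_rat_mul_sqr (d : nat) x : (d = 1 \/ prime d)%N -> x \in Crat ->
  d%:R * x ^+ 2 \in Num.int -> x \in Num.int.
Proof.
move=> d_sqfree x_rat dx2_int.
have d_neq0 : d%:R != 0 :> algC.
  by case: d_sqfree => [->|/prime_gt0]; rewrite pnatr_eq0 // -lt0n.
have /intrP[y yE] : d%:R * x \in Num.int.
  apply: Cint_rat_Aint; first by rewrite rpredM ?rpred_nat.
  apply: (@Aint_root_quadratic _ 0 (- (d%:R * (d%:R * x ^+ 2)))).
  - exact: rpred0.
  - by rewrite rpredN rpredM ?rpred_nat.
  by rewrite mul0r subr0; ring.
have /intrP[w wE] := dx2_int.
have y2E : y ^+ 2 = d%:Z * w.
  by apply: (@intr_inj algC); rewrite rmorphXn rmorphM /= -yE -wE; ring.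
have [c cE] : exists c : int, y = d%:Z * c.
  case: d_sqfree => [->|/prime_dvdz_sqr/(_ y2E)/dvdzP[c ->]];
    by [exists y; rewrite mul1r | exists c; rewrite mulrC].
apply/intrP; exists c; apply: (mulfI d_neq0).
by rewrite yE cE rmorphM.
Qed.

Section QuadraticField.
Variable d : nat.
Hypothesis d_gt0 : (0 < d)%N.

Definition sqrtNd : algC := sqrtC (- d%:R).

Lemma sqrtNd_sqr : sqrtNd ^+ 2 = - d%:R.
Proof. exact: sqrtCK. Qed.

Lemma sqrtNd_conj : sqrtNd^* = - sqrtNd.
Proof.
have : (sqrtNd^* - sqrtNd) * (sqrtNd^* + sqrtNd) = 0.
  have -> : (sqrtNd^* - sqrtNd) * (sqrtNd^* + sqrtNd) = sqrtNd^* ^+ 2 - sqrtNd ^+ 2 by ring.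
  by rewrite -rmorphXn sqrtNd_sqr rmorphN /= conjC_nat subrr.
move/eqP; rewrite mulf_eq0 subr_eq0 addr_eq0 => /orP[/eqP sqrtNd_real|/eqP //].
have : sqrtNd \is Num.real by rewrite CrealE sqrtNd_real.
by rewrite realEsqr sqrtNd_sqr oppr_ge0 lern0 (gtn_eqF d_gt0).
Qed.

Definition in_kd (z : algC) : Prop :=
  exists p q, [/\ p \in Crat, q \in Crat & z = p + q * sqrtNd].

Lemma in_kd_rat c : c \in Crat -> in_kd c.
Proof. by move=> c_rat; exists c, 0; split; rewrite ?rpred0 //; ring. Qed.

Lemma in_kdD x y : in_kd x -> in_kd y -> in_kd (x + y).
Proof.
move=> [p [q [p_rat q_rat ->]]] [p' [q' [p'_rat q'_rat ->]]].
by exists (p + p'), (q + q'); split; rewrite ?rpredD //; ring.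
Qed.

Lemma in_kdN x : in_kd x -> in_kd (- x).
Proof.
by move=> [p [q [p_rat q_rat ->]]]; exists (- p), (- q); split; rewrite ?rpredN //; ring.
Qed.

Lemma in_kdB x y : in_kd x -> in_kd y -> in_kd (x - y).
Proof. by move=> kx /in_kdN; apply: in_kdD. Qed.

Lemma in_kdM x y : in_kd x -> in_kd y -> in_kd (x * y).
Proof.
move=> [p [q [p_rat q_rat ->]]] [p' [q' [p'_rat q'_rat ->]]].
exists (p * p' - d%:R * q * q'), (p * q' + q * p'); split.
- by rewrite rpredB ?rpredM ?rpred_nat.
- by rewrite rpredD ?rpredM.
apply/eqP; rewrite -subr_eq0; apply/eqP.
transitivity (q * q' * (sqrtNd ^+ 2 + d%:R)); first ring.
by rewrite sqrtNd_sqr addNr mulr0.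
Qed.

Lemma in_kdX x n : in_kd x -> in_kd (x ^+ n).
Proof.
move=> kx; elim: n => [|n IHn]; first exact/in_kd_rat/rpred1.
by rewrite exprS; apply: in_kdM.
Qed.

Lemma conjC_kd p q : p \in Crat -> q \in Crat -> (p + q * sqrtNd)^* = p - q * sqrtNd.
Proof.
move=> p_rat q_rat; rewrite rmorphD rmorphM /= sqrtNd_conj.
by rewrite (conj_Creal (Creal_Crat p_rat)) (conj_Creal (Creal_Crat q_rat)); ring.
Qed.

Lemma in_kd_conjC x : in_kd x -> in_kd x^*.
Proof.
move=> [p [q [p_rat q_rat ->]]]; exists p, (- q); split; rewrite ?rpredN //.
by rewrite conjC_kd //; ring.
Qed.

Lemma in_kd_trace_norm_rat x : in_kd x -> x + x^* \in Crat /\ x * x^* \in Crat.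
Proof.
move=> [p [q [p_rat q_rat ->]]]; rewrite conjC_kd //; split.
  have -> : p + q * sqrtNd + (p - q * sqrtNd) = p *+ 2 by ring.
  by rewrite rpredMn.
have -> : (p + q * sqrtNd) * (p - q * sqrtNd) = p ^+ 2 - q ^+ 2 * sqrtNd ^+ 2 by ring.
by rewrite sqrtNd_sqr rpredB ?rpredM ?rpredX ?rpredN ?rpred_nat.
Qed.

Lemma in_kdV x : in_kd x -> in_kd x^-1.
Proof.
move=> kx; have [-> | x_neq0] := eqVneq x 0; first by rewrite invr0; apply/in_kd_rat/rpred0.
have -> : x^-1 = x^* * (x * x^*)^-1.
  by field; rewrite conjC_eq0 x_neq0.
apply/(in_kdM (in_kd_conjC kx))/in_kd_rat.
by rewrite rpredV; case: (in_kd_trace_norm_rat kx).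
Qed.

Lemma in_kd_Aint_trace_norm x : in_kd x -> x \in Aint ->
  x + x^* \in Num.int /\ x * x^* \in Num.int.
Proof.
move=> kx x_Aint; have [tr_rat nm_rat] := in_kd_trace_norm_rat kx.
have x'_Aint := Aint_conjC x_Aint.
by split; apply: Cint_rat_Aint; rewrite // ?rpredD ?rpredM.
Qed.

Lemma omega_dE : omega_d d = if (d %% 4 == 3)%N then (1 + sqrtNd) / 2 else sqrtNd.
Proof. by []. Qed.

Lemma in_kd_omega_d : in_kd (omega_d d).
Proof.
rewrite omega_dE; case: ifP => _; last by exists 0, 1; split; rewrite ?rpred0 ?rpred1 //; ring.
by exists (1 / 2), (1 / 2); split; rewrite ?rpredM ?rpredV ?rpred1 ?rpred_nat //; field.
Qed.

Lemma Od_in_kd z : in_Od d z -> in_kd z.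
Proof.
move=> [a [b ->]].
by apply: in_kdD; [|apply: in_kdM; last exact: in_kd_omega_d]; apply/in_kd_rat/rpred_int.
Qed.

End QuadraticField.

Section ClassNumberOne.
Variable d : nat.
Hypothesis hd : d \in class_one_d.

Lemma class_one_d_cases :
  [/\ (0 < d)%N, (d = 1 \/ prime d)%N & (d %% 4 == 3)%N \/ (d = 1 \/ d = 2)%N].
Proof.
move: hd; rewrite !inE.
by repeat (case/orP => [/eqP-> | ]; first by split => //; auto); move/eqP->; split => //; auto.
Qed.

Let d_gt0 : (0 < d)%N. Proof. by case: class_one_d_cases. Qed.

Lemma Aint_omega_d : omega_d d \in Aint.
Proof.
rewrite omega_dE; case: ifP => d_mod4; last first.
  apply: (@Aint_root_quadratic _ 0 d%:R); rewrite ?rpred0 ?rpred_nat //.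
  by rewrite sqrtNd_sqr mul0r subr0 addNr.
apply: (@Aint_root_quadratic _ 1 (d %/ 4).+1%:R); rewrite ?rpred1 ?rpred_nat //.
have dE : d%:R = 4 * (d %/ 4)%N%:R + 3 :> algC.
  by rewrite [in LHS](divn_eq d 4) (eqP d_mod4) natrD natrM mulrC.
transitivity ((sqrtNd d ^+ 2 + (4 * (d %/ 4)%N%:R + 3)) / 4).
  by rewrite -addn1 natrD; field.
by rewrite -dE sqrtNd_sqr addNr mul0r.
Qed.

Lemma Od_Aint z : in_Od d z -> z \in Aint.
Proof. by move=> [a [b ->]]; rewrite rpredD ?rpredM ?Aint_int ?Aint_omega_d. Qed.

Lemma Od_half_coords (a c m : int) : a ^+ 2 + d%:Z * c ^+ 2 = 4 * m ->
  in_Od d (a%:~R / 2 + c%:~R / 2 * sqrtNd d).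
Proof.
rewrite /in_Od omega_dE => norm4.
have [_ _ [d_mod4 | [d1 | d2]]] := class_one_d_cases; last first.
- move: norm4; rewrite d2 => /dvdz2_sqr_add_2sqr/andP[/divzK aE /divzK cE].
  exists (a %/ 2)%Z, (c %/ 2)%Z => /=.
  by rewrite -[in LHS]aE -[in LHS]cE !intrM; field.
- move: norm4; rewrite d1 mul1r => /dvdz2_sqr_add_sqr/andP[/divzK aE /divzK cE].
  exists (a %/ 2)%Z, (c %/ 2)%Z => /=.
  by rewrite -[in LHS]aE -[in LHS]cE !intrM; field.
(* For d = 3 mod 4, (a + c sqrt(-d))/2 = (a - c)/2 + c omega_d. *)
have dE : d%:Z = 2 * (d %/ 2)%N%:Z + 1 by move/eqP: d_mod4; lia.
move: norm4; rewrite dE d_mod4 => /dvdz2_sqr_add_odd_sqr/divzK acE.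
exists ((a - c) %/ 2)%Z, c.
apply/eqP; rewrite -subr_eq0; apply/eqP.
transitivity (((a - c)%:~R - (((a - c) %/ 2)%Z * 2)%:~R) / 2 :> algC).
  by rewrite rmorphB intrM /=; field.
by rewrite acE subrr mul0r.
Qed.

Lemma kd_Aint_Od y : in_kd d y -> y \in Aint -> in_Od d y.
Proof.
have [_ d_sqfree _] := class_one_d_cases.
move=> ky y_Aint; have [tr_int nm_int] := in_kd_Aint_trace_norm d_gt0 ky y_Aint.
case: ky => p [q [p_rat q_rat yE]].
rewrite yE conjC_kd // in tr_int nm_int.
have trE : p + q * sqrtNd d + (p - q * sqrtNd d) = 2 * p by ring.
have nmE : (p + q * sqrtNd d) * (p - q * sqrtNd d) = p ^+ 2 + d%:R * q ^+ 2.
  by transitivity (p ^+ 2 - q ^+ 2 * sqrtNd d ^+ 2); [ring | rewrite sqrtNd_sqr; ring].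
rewrite trE in tr_int; rewrite nmE in nm_int.
have /intrP[c cE] : 2 * q \in Num.int.
  apply: (Cint_rat_mul_sqr d_sqfree); first by rewrite rpredM ?rpred_nat.
  have -> : d%:R * (2 * q) ^+ 2 = 4 * (p ^+ 2 + d%:R * q ^+ 2) - (2 * p) ^+ 2 by ring.
  by apply: rpredB; [rewrite rpredM ?rpred_nat | apply: rpredX].
have /intrP[a aE] := tr_int; have /intrP[m mE] := nm_int.
have norm4 : a ^+ 2 + d%:Z * c ^+ 2 = 4 * m.
  apply: (@intr_inj algC); rewrite !rmorphD !rmorphM /= -aE -cE -mE.
  by rewrite !pmulrn; ring.
have := Od_half_coords norm4; rewrite -aE -cE yE.
by have -> : 2 * p / 2 + 2 * q / 2 * sqrtNd d = p + q * sqrtNd d by field.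
Qed.

Lemma Od_norm_ge1 z : in_Od d z -> z != 0 -> 1 <= `|z|.
Proof.
move=> Oz z_neq0.
have [_ nm_int] := in_kd_Aint_trace_norm d_gt0 (Od_in_kd Oz) (Od_Aint Oz).
rewrite -normCK in nm_int.
have nm_ge1 : 1 <= `|z| ^+ 2.
  have := norm_intr_ge1 nm_int; rewrite normrX normr_id expf_eq0 normr_eq0.
  by rewrite (negPf z_neq0) andbF; apply.
by rewrite -(ler_pXn2r (n := 2)) ?nnegrE ?ler01 ?normr_ge0 // expr1n.
Qed.

Lemma sqrt_discriminant_notin_kd D : is_discriminant d D -> ~ in_kd d (sqrtC D).
Proof.
move=> [OD D_nsqr _] ks; apply: D_nsqr; exists (sqrtC D); split; last by rewrite sqrtCK.
apply: kd_Aint_Od ks _.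
have [tr_int nm_int] := in_kd_Aint_trace_norm d_gt0 (Od_in_kd OD) (Od_Aint OD).
exact: Aint_sqrt tr_int nm_int (sqrtCK D).
Qed.

Lemma eps_tu_inj D t u t' u' : is_discriminant d D ->
  in_kd d t -> in_kd d u -> in_kd d t' -> in_kd d u' ->
  eps_tu D t u = eps_tu D t' u' -> t = t' /\ u = u'.
Proof.
move=> hD kt ku kt' ku' epsE.
have E : t + u * sqrtC D = t' + u' * sqrtC D.
  by apply: (@mulIf _ 2^-1); rewrite ?invr_eq0 ?pnatr_eq0.
have [uE | u_neq] := eqVneq u u'.
  by split=> //; apply: (addIr (u * sqrtC D)); rewrite E uE.
exfalso; apply: (sqrt_discriminant_notin_kd hD).
have -> : sqrtC D = (t - t') / (u' - u).
  have tE : t = t' + u' * sqrtC D - u * sqrtC D by rewrite -E; ring.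
  by rewrite tE; field; rewrite subr_eq0 eq_sym.
by apply: in_kdM; [apply: in_kdB | apply/in_kdV/in_kdB].
Qed.

End ClassNumberOne.

Section PellPowers.
Variables D t0 u0 : algC.
Hypothesis pell : t0 ^+ 2 - u0 ^+ 2 * D = 4.

Let u0D : u0 ^+ 2 * sqrtC D ^+ 2 = t0 ^+ 2 - 4.
Proof. by rewrite sqrtCK -pell; ring. Qed.

Lemma eps_tu_sqr : eps_tu D t0 u0 ^+ 2 = eps_tu D (t0 ^+ 2 - 2) (t0 * u0).
Proof.
apply/eqP; rewrite -subr_eq0; apply/eqP; rewrite /eps_tu.
transitivity ((u0 ^+ 2 * sqrtC D ^+ 2 - (t0 ^+ 2 - 4)) / 4); first by field.
by rewrite u0D subrr mul0r.
Qed.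

Lemma eps_tu_cube :
  eps_tu D t0 u0 ^+ 3 = eps_tu D (t0 ^+ 3 - 3 * t0) (u0 * (t0 ^+ 2 - 1)).
Proof.
rewrite exprS eps_tu_sqr; apply/eqP; rewrite -subr_eq0; apply/eqP; rewrite /eps_tu.
transitivity (t0 * (u0 ^+ 2 * sqrtC D ^+ 2 - (t0 ^+ 2 - 4)) / 4); first by field.
by rewrite u0D subrr mulr0 mul0r.
Qed.

Lemma pell_u_neq0 : 1 < `|eps_tu D t0 u0| -> u0 != 0.
Proof.
apply: contraTneq => u0_eq0.
have t0_sqr : t0 ^+ 2 = 4 by rewrite -pell u0_eq0 (expr2 0) !mul0r subr0.
have : `|t0| ^+ 2 == 2 ^+ 2 by rewrite -normrX t0_sqr normr_nat -natrX.
rewrite eqrXn2 ?ler0n // => /eqP t0_norm.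
by rewrite /eps_tu u0_eq0 mul0r addr0 normrM t0_norm normfV normr_nat divff ?pnatr_eq0 ?ltxx.
Qed.

Lemma pell_norm_bounds :
  `|t0| ^+ 2 <= `|u0| ^+ 2 * `|D| + 4 /\ `|u0| ^+ 2 * `|D| <= `|t0| ^+ 2 + 4.
Proof.
have u0DE : u0 ^+ 2 * D = t0 ^+ 2 - 4 by rewrite -pell; ring.
split.
  have -> : `|t0| ^+ 2 = `|u0 ^+ 2 * D + 4| by rewrite -normrX u0DE subrK.
  by apply: le_trans (ler_normD _ _) _; rewrite normrM normrX normr_nat.
rewrite -normrX -normrM u0DE.
by apply: le_trans (ler_normB _ _) _; rewrite normrX normr_nat.
Qed.

End PellPowers.

Lemma pell_power_coords d D t0 u0 (t u : nat -> algC) : d \in class_one_d ->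
  is_discriminant d D -> in_Od d t0 -> in_Od d u0 -> t0 ^+ 2 - u0 ^+ 2 * D = 4 ->
  (forall n, [/\ in_Od d (t n), in_Od d (u n) &
                 eps_tu D t0 u0 ^+ n.+1 = (t n + u n * sqrtC D) / 2]) ->
  [/\ t 0%N = t0 /\ u 0%N = u0,
      t 1%N = t0 ^+ 2 - 2 /\ u 1%N = t0 * u0
    & t 2%N = t0 ^+ 3 - 3 * t0 /\ u 2%N = u0 * (t0 ^+ 2 - 1)].
Proof.
move=> hd hD Ot0 Ou0 pell htu.
have coords n t' u' : in_kd d t' -> in_kd d u' ->
    eps_tu D t0 u0 ^+ n.+1 = eps_tu D t' u' -> t n = t' /\ u n = u'.
  move=> kt' ku' E; have [Otn Oun En] := htu n.
  by apply: (eps_tu_inj hd hD (Od_in_kd Otn) (Od_in_kd Oun) kt' ku'); rewrite -E.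
have kt0 := Od_in_kd Ot0; have ku0 := Od_in_kd Ou0.
have kn (k : nat) : in_kd d k%:R by apply/in_kd_rat/rpred_nat.
split.
- exact: coords 0%N t0 u0 kt0 ku0 (expr1 _).
- exact: coords 1%N _ _ (in_kdB (in_kdX 2 kt0) (kn 2)) (in_kdM kt0 ku0) (eps_tu_sqr pell).
- exact: coords 2%N _ _ (in_kdB (in_kdX 3 kt0) (in_kdM (kn 3) kt0))
    (in_kdM ku0 (in_kdB (in_kdX 2 kt0) (kn 1))) (eps_tu_cube pell).
Qed.

Section RealBounds.
Variable R : realFieldType.
Implicit Types a b dl sg v w : R.

Lemma ge1_of_sqr_gt200 sg dl : 0 <= sg -> sg ^+ 2 = dl -> 200 < dl -> 1 <= sg.
Proof. by move=> *; nra. Qed.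

Lemma u1_bound_real a b dl sg : 0 <= a -> 0 <= b -> 0 <= sg -> sg ^+ 2 = dl ->
  200 < dl -> a ^+ 2 <= b ^+ 2 * dl + 4 -> 4 / 9 * b ^+ 2 <= a ->
  a * b <= 30 * dl * sg.
Proof.
move=> a_ge0 b_ge0 sg_ge0 sgE dl_gt pell_le b_small.
have sg_ge1 := ge1_of_sqr_gt200 sg_ge0 sgE dl_gt.
have a_le : a <= 3 * dl.
  rewrite leNgt; apply/negP => a_gt.
  have : b ^+ 2 * dl <= 9 / 4 * a * dl by nra.
  nra.
have b_le : b <= 3 * sg.
  rewrite leNgt; apply/negP => b_gt.
  have : 9 * sg ^+ 2 < b ^+ 2 by nra.
  nra.
have : a * b <= 3 * dl * (3 * sg) by apply: ler_pM => //; nra.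
nra.
Qed.

Lemma u2_bound_real a b dl sg : 0 <= a -> 0 <= b -> 0 <= sg -> sg ^+ 2 = dl ->
  200 < dl -> 1 <= b -> a ^+ 2 <= b ^+ 2 * dl + 4 -> b ^+ 2 * dl <= a ^+ 2 + 4 ->
  4 / 9 * (a * b) ^+ 2 <= a ^+ 2 + 2 ->
  b * (a ^+ 2 + 1) <= 30 * dl * sg.
Proof.
move=> a_ge0 b_ge0 sg_ge0 sgE dl_gt b_ge1 pell_le pell_ge ab_small.
have sg_ge1 := ge1_of_sqr_gt200 sg_ge0 sgE dl_gt.
have a2_ge : 196 <= a ^+ 2 by nra.
have b_le : b <= 3.
  rewrite leNgt; apply/negP => b_gt.
  have : 0 <= (b ^+ 2 - 9) * a ^+ 2 by apply: mulr_ge0; nra.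
  nra.
have : a ^+ 2 <= 9 * dl + 4 by nra.
nra.
Qed.

Lemma t2_lt_real a b dl v w : 0 <= a -> 0 <= b -> 200 < dl -> 1 <= b ->
  b ^+ 2 * dl <= a ^+ 2 + 4 -> a ^+ 2 - 1 <= v -> w <= a ^+ 3 + 3 * a ->
  w < 4 / 9 * (b * v) ^+ 2.
Proof.
move=> a_ge0 b_ge0 dl_gt b_ge1 pell_ge v_ge w_le.
have a2_ge : 196 <= a ^+ 2 by nra.
have v_ge195 : 195 <= v by nra.
have v_le : v ^+ 2 <= (b * v) ^+ 2.
  have : 0 <= (b ^+ 2 - 1) * v ^+ 2 by apply: mulr_ge0; nra.
  rewrite exprMn; nra.
have v2_ge : (a ^+ 2 - 1) ^+ 2 <= v ^+ 2.
  have : 0 <= (v - (a ^+ 2 - 1)) * (v + (a ^+ 2 - 1)) by apply: mulr_ge0; nra.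
  nra.
have : 9 * (a ^+ 3 + 3 * a) < 4 * (a ^+ 2 - 1) ^+ 2 by nra.
nra.
Qed.

End RealBounds.

Section CoordBounds.
Variables D t0 u0 : algC.
Hypotheses (D_gt : 200 < `|D|) (u0_ge1 : 1 <= `|u0|).
Hypotheses (pell_le : `|t0| ^+ 2 <= `|u0| ^+ 2 * `|D| + 4)
           (pell_ge : `|u0| ^+ 2 * `|D| <= `|t0| ^+ 2 + 4).

(* algC is only partially ordered, so the estimates are transferred to the real
   closed field algR, where nra applies. *)
Let absR (z : algC) : algR := in_algR (normr_real z).
Let sqrtR : algR := in_algR (sqrtC_real (normr_ge0 D)).

Let algR_leE (x y : algR) : (x <= y) = (algRval x <= algRval y). Proof. by []. Qed.
Let algR_ltE (x y : algR) : (x < y) = (algRval x < algRval y). Proof. by []. Qed.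
Let algRvalE := (rmorphD, rmorphB, rmorphM, rmorphXn, rmorph_nat, rmorph1, fmorphV).

Let absR_t0_ge0 : 0 <= absR t0. Proof. by rewrite algR_leE /=. Qed.
Let absR_u0_ge0 : 0 <= absR u0. Proof. by rewrite algR_leE /=. Qed.
Let sqrtR_ge0 : 0 <= sqrtR. Proof. by rewrite algR_leE /= sqrtC_ge0. Qed.
Let sqrtR_sqr : sqrtR ^+ 2 = absR D. Proof. by apply: val_inj; rewrite /= -expr2 sqrtCK. Qed.
Let absR_D_gt : 200 < absR D. Proof. by rewrite algR_ltE ?algRvalE /=. Qed.
Let absR_u0_ge1 : 1 <= absR u0. Proof. by rewrite algR_leE ?algRvalE /=. Qed.
Let pell_leR : absR t0 ^+ 2 <= absR u0 ^+ 2 * absR D + 4.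
Proof. by rewrite algR_leE ?algRvalE /=. Qed.
Let pell_geR : absR u0 ^+ 2 * absR D <= absR t0 ^+ 2 + 4.
Proof. by rewrite algR_leE ?algRvalE /=. Qed.

Lemma u1_bound : ~ (`|t0| < 4 / 9 * `|u0| ^+ 2) ->
  `|t0 * u0| <= 30 * `|D| * sqrtC `|D|.
Proof.
move=> not_small.
have small : 4 / 9 * absR u0 ^+ 2 <= absR t0.
  by rewrite leNgt algR_ltE ?algRvalE /=; apply/negP.
have := u1_bound_real absR_t0_ge0 absR_u0_ge0 sqrtR_ge0 sqrtR_sqr absR_D_gt pell_leR small.
by rewrite normrM algR_leE ?algRvalE /=.
Qed.

Lemma u2_bound : ~ (`|t0 ^+ 2 - 2| < 4 / 9 * `|t0 * u0| ^+ 2) ->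
  `|u0 * (t0 ^+ 2 - 1)| <= 30 * `|D| * sqrtC `|D|.
Proof.
move=> not_small.
have small : 4 / 9 * (absR t0 * absR u0) ^+ 2 <= absR t0 ^+ 2 + 2.
  have -> : absR t0 * absR u0 = absR (t0 * u0) by apply: val_inj; rewrite /= normrM.
  apply: (@le_trans _ _ (absR (t0 ^+ 2 - 2))).
    by rewrite leNgt algR_ltE ?algRvalE /=; apply/negP.
  rewrite algR_leE ?algRvalE /=.
  by apply: le_trans (ler_normB _ _) _; rewrite normrX normr_nat.
have := u2_bound_real absR_t0_ge0 absR_u0_ge0 sqrtR_ge0 sqrtR_sqr absR_D_gt absR_u0_ge1
  pell_leR pell_geR small.
rewrite algR_leE ?algRvalE /= => bound.
rewrite normrM; apply: le_trans bound; rewrite ler_wpM2l //.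
by apply: le_trans (ler_normB _ _) _; rewrite normrX normr1.
Qed.

Lemma t2_lt : `|t0 ^+ 3 - 3 * t0| < 4 / 9 * `|u0 * (t0 ^+ 2 - 1)| ^+ 2.
Proof.
have v_ge : absR t0 ^+ 2 - 1 <= absR (t0 ^+ 2 - 1).
  rewrite algR_leE ?algRvalE /=.
  by have := lerB_dist (t0 ^+ 2) 1; rewrite normrX normr1.
have w_le : absR (t0 ^+ 3 - 3 * t0) <= absR t0 ^+ 3 + 3 * absR t0.
  rewrite algR_leE ?algRvalE /=.
  by apply: le_trans (ler_normB _ _) _; rewrite normrX normrM normr_nat.
have := t2_lt_real absR_t0_ge0 absR_u0_ge0 absR_D_gt absR_u0_ge1 pell_geR v_ge w_le.
by rewrite normrM algR_ltE ?algRvalE /=.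
Qed.

End CoordBounds.

Theorem lemma4p6 (d : nat) (hd : d \in class_one_d) :
  exists N : algC, 0 < N /\
  forall (D t0 u0 : algC), is_discriminant d D -> N < `|D| ->
    fundamental_sol d D t0 u0 ->
    forall (t u : nat -> algC),
      (forall n : nat, [/\ in_Od d (t n), in_Od d (u n) &
         eps_tu D t0 u0 ^+ n.+1 = (t n + u n * sqrtC D) / 2]) ->
    forall m : nat,
      `|t m| < 4 / 9 * `|u m| ^+ 2 ->
      (forall k : nat, (k < m)%N -> ~ (`|t k| < 4 / 9 * `|u k| ^+ 2)) ->
      m <> 0%N ->
      `|u m| <= 30 * `|D| * sqrtC `|D|.
Proof.
exists 200; split; first by rewrite ltr0n.
move=> D t0 u0 hD D_gt [[Ot0 Ou0 pell] eps_gt1 _] t u htu m _ hmin m_neq0.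
have [[t0E u0E] [t1E u1E] [t2E u2E]] := pell_power_coords hd hD Ot0 Ou0 pell htu.
have u0_ge1 := Od_norm_ge1 hd Ou0 (pell_u_neq0 pell eps_gt1).
have [pell_le pell_ge] := pell_norm_bounds pell.
case: m hmin m_neq0 => [|[|[|m]]] // hmin _.
- rewrite u1E; apply: u1_bound D_gt pell_le _.
  by rewrite -t0E -u0E; apply: hmin.
- rewrite u2E; apply: u2_bound D_gt u0_ge1 pell_le pell_ge _.
  by rewrite -t1E -u1E; apply: hmin.
- exfalso; apply: (hmin 2%N isT); rewrite t2E u2E; exact: t2_lt D_gt u0_ge1 pell_ge.
Qed.
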